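(* Let $n\ge 1$, let $X=\{x_1,\dots,x_n\}$ and $Z=\{z_1,\dots,z_n\}$ be sets of $n$ points equipped with symmetric non-negative functions $d_X\colon X\times X\to\mathbb{R}^+$ and $d_Z\colon Z\times Z\to\mathbb{R}^+$, and let $f_\bullet\colon X\to Z$ be the bijection $f_\bullet(x_i)=z_i$. Fix $\varepsilon>0$ and suppose that $|d_X(x,y)-d_Z(f_\bullet(x),f_\bullet(y))|<\varepsilon$ for all $x,y\in X$. Then, for every positive integer $q$, \[ d^q_{f_0}(B(X),B(Z))\le (n-1)^{1/q}\cdot\varepsilon . \]
   Context: $\mathbb{R}^+=[0,\infty)$. For a finite set $Y=\{y_1,\dots,y_n\}$ with a symmetric non-negative function $d_Y\colon Y\times Y\to\mathbb{R}^+$ (distinct points may have value $0$, and the triangle inequality need not hold): the Vietoris–Rips graph $\mathrm{VR}_0(Y)$ has vertex set $Y$ and no edges, and for $r>0$, $\mathrm{VR}_r(Y)$ has vertex set $Y$ and an edge $[y,y']$ ($y\neq y'$) whenever $d_Y(y,y')\le r$. Let $G_r(Y)$, for $r\ge 0$, denote the graph on $Y$ with an edge $[y,y']$ ($y\ne y'$) whenever $d_Y(y,y')\le r$. $H_0(\mathrm{VR}_r(Y))$ is the $\mathbb{Z}_2$-vector space freely generated by the connected components of $\mathrm{VR}_r(Y)$; $[y]$ denotes the class of $y$. For $b\ge 0$ let $\ker^+_b(Y)\subseteq H_0(\mathrm{VR}_0(Y))$ be the span of all $[y]+[y']$ with $y,y'$ in the same connected component of $G_b(Y)$; let $\ker^-_0(Y)=0$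 and, for $b>0$, $\ker^-_b(Y)$ be the span of all $[y]+[y']$ with $y,y'$ in the same connected component of $G_r(Y)$ for some $0\le r<b$. For $j\in\{2,\dots,n\}$, the death value $b_j$ of $y_j$ is the least $r\ge 0$ such that $y_j$ lies in the same connected component of $G_r(Y)$ as some $y_i$ with $i<j$ ($y_1$ never dies). For $a\ge 0$, $m^Y(a)$ is the number of $j\in\{2,\dots,n\}$ with $b_j=a$; the barcode $B(Y)$ is the multiset of death values with these multiplicities. Given $X,Z,f_\bullet$ as in the claim, $f_0\colon H_0(\mathrm{VR}_0(X))\to H_0(\mathrm{VR}_0(Z))$ is the linear isomorphism $[x_i]\mapsto[z_i]$, and the induced block function is, for $a,b\in\mathbb{R}^+$, \[ \mathcal{M}^0_f(a,b)=\dim\frac{f_0(\ker^+_a(X))\cap\ker^+_b(Z)}{f_0(\ker^-_a(X))\cap\ker^+_b(Z)+f_0(\ker^+_a(X))\cap\ker^-_b(Z)}. \] The induced matching distance is $d^q_{f_0}(B(X),B(Z))=\big(\sum_{a,b\in\mathbb{R}^+}\mathcal{M}^0_f(a,b)\,|a-b|^q\big)^{1/q}$ (only finitely many terms are nonzero). *)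

From HB Require Import structures.
From mathcomp Require Import all_boot all_order all_algebra.
From mathcomp Require Import mathcomp_extra boolp classical_sets fsbigop reals exp.
Set Implicit Arguments. Unset Strict Implicit. Unset Printing Implicit Defensive.
Import Order.TTheory GRing.Theory Num.Theory.
Local Open Scope ring_scope.

Definition Gedge (R : realType) n (d : 'I_n -> 'I_n -> R) (r : R) : rel 'I_n :=
  fun i j => (i != j) && (d i j <= r).

Definition same_comp (R : realType) n (d : 'I_n -> 'I_n -> R) (r : R) (i j : 'I_n) :=
  connect (Gedge d r) i j.

(* H_0(VR_0(Y)) over Z_2: the F_2-vector space freely generated by the
   points, realized as row vectors; [y_i] = cls i. *)
Definition H0 n := 'rV['F_2]_n.
Definition cls n (i : 'I_n) : H0 n := delta_mx 0 i.

Definition kerp (R : realType) n (d : 'I_n -> 'I_n -> R) (b : R) : {vspace H0 n} :=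
  <<[seq (cls p.1 + cls p.2)%R | p <- enum [pred p : 'I_n * 'I_n | same_comp d b p.1 p.2]]>>%VS.

Definition kerm (R : realType) n (d : 'I_n -> 'I_n -> R) (b : R) : {vspace H0 n} :=
  if b == 0 then 0%VS else
  <<[seq (cls p.1 + cls p.2)%R | p <- enum [pred p : 'I_n * 'I_n |
       `[< exists r : R, (0 <= r)%R /\ (r < b)%R /\ same_comp d r p.1 p.2 >] ]]>>%VS.

(* f_0 : [x_i] |-> [z_i]; in the common basis representation H0 n it is the identity. *)
Definition f0 n : 'End(H0 n) := \1%VF.

(* induced block function M^0_f(a,b): dimension of N / D where
   D = f0(ker^-_a X) /\ ker^+_b Z + f0(ker^+_a X) /\ ker^-_b Z is a subspace of
   N = f0(ker^+_a X) /\ ker^+_b Z, so dim(N/D) = dim N - dim D. *)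
Definition Mf (R : realType) n (dX dZ : 'I_n -> 'I_n -> R) (a b : R) : nat :=
  (\dim ((f0 n @: kerp dX a) :&: kerp dZ b)
   - \dim ((f0 n @: kerm dX a) :&: kerp dZ b + (f0 n @: kerp dX a) :&: kerm dZ b))%N.

Definition dmatch (R : realType) n (dX dZ : 'I_n -> 'I_n -> R) (q : nat) : R :=
  powR (\sum_(p \in [set p : R * R | 0 <= p.1 /\ 0 <= p.2])
          ((Mf dX dZ p.1 p.2)%:R * `|p.1 - p.2| ^+ q)) (q%:R^-1).

From HB Require Import structures.
From mathcomp Require Import all_boot all_order all_algebra.
From mathcomp Require Import mathcomp_extra boolp classical_sets fsbigop reals exp.
From mathcomp Require Import cardinality zify lra.
Import Order.TTheory GRing.Theory Num.Theory.
Local Open Scope ring_scope.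

(* If |dX - dZ| < eps, two points joined in G_a(X) are joined in G_r(Z) for some
   r < a + eps, so ker^+_a(X) lies in ker^-_b(Z) as soon as b >= a + eps, and
   symmetrically; hence M(a, b) = 0 unless |a - b| < eps.  For fixed a, the blocks
   M(a, b) telescope along the filtration ker^+_b(Z) into dim ker^+_a/ker^-_a (X),
   and these telescope along a into dim ker^+_a(X) <= n - 1, since ker^+_a(X) lies
   in the kernel of the augmentation [y] |-> 1.  So the multiplicities add up to at
   most n - 1, each weighted by |a - b|^q < eps^q. *)

Section Telescope.
Context {disp : Order.disp_t} {T : orderType disp}.
Variables (s : seq T) (F G : T -> nat).
Hypothesis leFG : {in s, forall x, F x <= G x}%N.
Hypothesis leFG_step : {in s &, forall x y, (y < x)%O -> (F x + G y <= G x)%N}.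

Lemma leq_sum_gt_path x t : {subset x :: t <= s} -> path >%O x t ->
  (\sum_(y <- x :: t) F y <= G x)%N.
Proof.
elim: t x => [|y t IHt] x sub_s /=; rewrite big_cons.
  by rewrite big_nil addn0 => _; apply/leFG/sub_s/mem_head.
have xs : x \in s by apply/sub_s/mem_head.
have ys : y \in s by apply/sub_s; rewrite !inE eqxx orbT.
move=> /andP[yx t_path]; apply: leq_trans (leFG_step x y xs ys yx); rewrite leq_add2l.
by apply: IHt => // z zt; apply: sub_s; rewrite inE zt orbT.
Qed.

Lemma leq_sum_telescope M : uniq s -> {in s, forall x, G x <= M}%N ->
  (\sum_(x <- s) F x <= M)%N.
Proof.
move=> s_uniq leGM; set t := rev (sort <=%O s).
have perm_t : perm_eq t s by rewrite perm_rev perm_sort.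
have : sorted >%O t by rewrite rev_sorted sort_lt_sorted.
rewrite -(perm_big _ perm_t); case t_eq: t => [|x t'] /=; first by rewrite big_nil.
have sub_s : {subset x :: t' <= s} by move=> y; rewrite -t_eq (perm_mem perm_t).
move=> t'_path; apply: leq_trans (leGM x _); last exact/sub_s/mem_head.
exact: leq_sum_gt_path.
Qed.

End Telescope.

Section BlockDimension.
Context {K : fieldType} {vT : vectType K} (Am A : {vspace vT}).

Definition block_dim (Bm B : {vspace vT}) : nat :=
  (\dim (A :&: B) - \dim (Am :&: B + A :&: Bm))%N.

Definition cum_dim (B : {vspace vT}) : nat := (\dim (A :&: B) - \dim (Am :&: B))%N.

Lemma block_le_cum_dim Bm B : (block_dim Bm B <= cum_dim B)%N.
Proof. by apply/leq_sub2l/dimvS/addvSl. Qed.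

Lemma block_dim_eq0_l Bm B : (B <= Am)%VS -> block_dim Bm B = 0%N.
Proof.
move=> BAm; apply/eqP; rewrite subn_eq0; apply/dimvS/(subv_trans _ (addvSl _ _)).
by rewrite subv_cap capvSr (subv_trans (capvSr _ _)).
Qed.

Lemma block_dim_eq0_r Bm B : (A <= Bm)%VS -> block_dim Bm B = 0%N.
Proof.
move=> ABm; apply/eqP; rewrite subn_eq0; apply/dimvS/(subv_trans _ (addvSr _ _)).
by rewrite subv_cap capvSl (subv_trans (capvSl _ _)).
Qed.

Hypothesis AmA : (Am <= A)%VS.

Lemma cum_dim_le B : (cum_dim B <= \dim A - \dim Am)%N.
Proof.
rewrite /cum_dim; have := dimv_sum_cap (A :&: B) Am.
have : (\dim (A :&: B + Am) <= \dim A)%N by rewrite dimvS // subv_add AmA capvSl.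
have : (\dim (A :&: B :&: Am) <= \dim (Am :&: B))%N.
  by rewrite dimvS // subv_cap capvSr (subv_trans (capvSl _ _)) ?capvSr.
have : (\dim (Am :&: B) <= \dim (A :&: B))%N by rewrite dimvS ?capvS.
have : (\dim Am <= \dim A)%N by rewrite dimvS.
lia.
Qed.

Lemma block_cum_dim_step B' Bm B : (B' <= Bm)%VS -> (Bm <= B)%VS ->
  (block_dim Bm B + cum_dim B' <= cum_dim B)%N.
Proof.
move=> B'Bm BmB; rewrite /block_dim /cum_dim.
have := dimv_sum_cap (Am :&: B) (A :&: B').
have : (\dim (Am :&: B + A :&: B') <= \dim (Am :&: B + A :&: Bm))%N.
  by rewrite dimvS // addvS ?capvS.
have : (\dim (Am :&: B :&: (A :&: B')) <= \dim (Am :&: B'))%N.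
  apply/dimvS; rewrite subv_cap.
  by rewrite (subv_trans (capvSl _ _) (capvSl _ _)) (subv_trans (capvSr _ _) (capvSr _ _)).
have : (\dim (Am :&: B + A :&: Bm) <= \dim (A :&: B))%N.
  by rewrite dimvS // subv_add !capvS.
have : (\dim (Am :&: B) <= \dim (A :&: B))%N by rewrite dimvS ?capvS.
have : (\dim (Am :&: B') <= \dim (A :&: B'))%N by rewrite dimvS ?capvS.
lia.
Qed.

End BlockDimension.

Section Kernels.
Context {R : realType} {n : nat}.
Implicit Types (d : 'I_n -> 'I_n -> R) (a b r : R).

Lemma same_comp_mono d1 d2 r1 r2 i j :
  (forall u v, d1 u v <= r1 -> d2 u v <= r2) ->
  same_comp d1 r1 i j -> same_comp d2 r2 i j.
Proof.
move=> le_d12; apply: connect_sub => u v /andP[uv duv].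
by apply: connect1; rewrite /Gedge uv le_d12.
Qed.

Lemma kerp_subv d a (V : {vspace H0 n}) :
  (forall i j, same_comp d a i j -> cls i + cls j \in V) -> (kerp d a <= V)%VS.
Proof.
move=> hV; apply/span_subvP => v /mapP[[i j]]; rewrite mem_enum => ij ->.
exact: hV.
Qed.

Lemma cls_add_kerp d a i j : same_comp d a i j -> cls i + cls j \in kerp d a.
Proof. by move=> ij; apply/memv_span/mapP; exists (i, j); rewrite ?mem_enum. Qed.

Lemma kerp_sub_kerm d r b : 0 <= r -> r < b -> (kerp d r <= kerm d b)%VS.
Proof.
move=> r_ge0 rb; rewrite /kerm gt_eqF ?(le_lt_trans r_ge0) //.
apply: kerp_subv => i j ij; apply/memv_span/mapP; exists (i, j) => //.
by rewrite mem_enum; apply/asboolP; exists r.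
Qed.

Lemma kerm_sub_kerp d b : (kerm d b <= kerp d b)%VS.
Proof.
rewrite /kerm; case: eqP => _; first exact: sub0v.
apply/span_subvP => v /mapP[[i j]]; rewrite mem_enum => /asboolP[r [_ [rb ij]]] ->.
apply/cls_add_kerp; apply: same_comp_mono ij => u w duw; exact: le_trans duw (ltW rb).
Qed.

Lemma kerp_sub_kerm_shift d1 d2 eps a b :
  (forall i j, d2 i j < d1 i j + eps) -> 0 < eps -> 0 <= a -> a + eps <= b ->
  (kerp d1 a <= kerm d2 b)%VS.
Proof.
move=> d21 eps_gt0 a_ge0 abe.
pose r := \big[Order.max/a]_(p : 'I_n * 'I_n | d1 p.1 p.2 <= a) d2 p.1 p.2.
have le_r u v : d1 u v <= a -> d2 u v <= r.
  exact: (le_bigmax_cond a (fun p => d2 p.1 p.2) (j := (u, v))).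
have r_lt_b : r < b.
  apply: bigmax_lt => [|p dpa]; first lra.
  by apply: lt_le_trans (d21 _ _) (le_trans _ abe); rewrite lerD2r.
apply: subv_trans _ (kerp_sub_kerm d2 r b (le_trans a_ge0 (bigmax_ge_id _ _ _ _)) r_lt_b).
by apply: kerp_subv => i j ij; apply/cls_add_kerp; apply: same_comp_mono ij.
Qed.

Lemma kerp_dim_le d b : (\dim (kerp d b) <= n.-1)%N.
Proof.
have dimH0 : \dim {:H0 n} = n by rewrite dimvf /dim /= mul1n.
have [n0|n_gt0] := posnP n.
  by apply: leq_trans (dimvS (subvf _)) _; rewrite dimH0 n0.
pose i0 : 'I_n := Ordinal n_gt0.
pose aug : 'Hom(H0 n, 'M['F_2]_1) := linfun (mulmxr (const_mx 1)).
have aug_cls i : aug (cls i) = const_mx 1 by rewrite lfunE /= /cls -rowE row_const.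
have kerp_aug : (kerp d b <= lker aug)%VS.
  apply: kerp_subv => i j _; rewrite memv_ker linearD /= !aug_cls.
  by apply/eqP/matrixP => x y; rewrite !mxE; apply/eqP.
have img_aug : (0 < \dim (limg aug))%N.
  rewrite lt0n dimv_eq0; apply/negP => /eqP img0.
  have := memv_img aug (memvf (cls i0)); rewrite img0 memv0 aug_cls => /eqP.
  by move/matrixP => /(_ 0 0); rewrite !mxE.
have := limg_ker_dim aug fullv; rewrite capfv dimH0 => dim_sum.
by rewrite -ltnS prednK // -[X in (_ < X)%N]dim_sum -addn1 leq_add ?dimvS.
Qed.

Lemma Mf_block (dX dZ : 'I_n -> 'I_n -> R) a b :
  Mf dX dZ a b = block_dim (kerm dX a) (kerp dX a) (kerm dZ b) (kerp dZ b).
Proof. by rewrite /Mf /f0 !lim1g. Qed.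

End Kernels.

Section Multiplicities.
Context {R : realType} {n : nat} {dX dZ : 'I_n -> 'I_n -> R} {eps : R}.
Hypothesis eps_gt0 : 0 < eps.
Hypothesis dXZ_close : forall i j, `|dX i j - dZ i j| < eps.

Lemma Mf_eq0_far (a b : R) : 0 <= a -> 0 <= b -> eps <= `|a - b| -> Mf dX dZ a b = 0%N.
Proof.
have dXZ i j : dX i j < dZ i j + eps.
  by move: (dXZ_close i j); rewrite ltr_norml => /andP[]; lra.
have dZX i j : dZ i j < dX i j + eps.
  by move: (dXZ_close i j); rewrite ltr_norml => /andP[]; lra.
move=> a_ge0 b_ge0; rewrite Mf_block ler_normr => /orP[ba|ab].
  by apply: block_dim_eq0_l; apply: kerp_sub_kerm_shift dXZ eps_gt0 b_ge0 _; lra.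
by apply: block_dim_eq0_r; apply: kerp_sub_kerm_shift dZX eps_gt0 a_ge0 _; lra.
Qed.

Lemma sum_Mf_le (s : seq (R * R)) :
  uniq s -> {in s, forall p : R * R, 0 <= p.1 /\ 0 <= p.2} ->
  (\sum_(p <- s) Mf dX dZ p.1 p.2 <= n.-1)%N.
Proof.
move=> s_uniq s_ge0.
pose SA := undup [seq p.1 | p <- s]; pose SB := undup [seq p.2 | p <- s].
have SA_ge0 a : a \in SA -> 0 <= a by rewrite mem_undup => /mapP[p /s_ge0[]] ? _ ->.
have SB_ge0 b : b \in SB -> 0 <= b by rewrite mem_undup => /mapP[p /s_ge0[]] _ ? ->.
have sub_SAB : {subset s <= [seq (a, b) | a <- SA, b <- SB]}.
  by move=> [a b] ab_s; apply: allpairs_f; rewrite mem_undup; apply/mapP; exists (a, b).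
have SAB_uniq : uniq [seq (a, b) | a <- SA, b <- SB].
  by apply: allpairs_uniq; rewrite ?undup_uniq // => -[? ?] [? ?] _ _ [-> ->].
apply: (@leq_trans (\sum_(p <- [seq (a, b) | a <- SA, b <- SB]) Mf dX dZ p.1 p.2)).
  exact: (@uniq_sub_le_big _ addn _ leqnn (fun m k => leq_addr k m) 0%N _ _ _ xpredT
    (fun p => Mf dX dZ p.1 p.2) s_uniq SAB_uniq sub_SAB).
rewrite big_allpairs.
apply: (@leq_trans (\sum_(a <- SA) (\dim (kerp dX a) - \dim (kerm dX a)))).
  apply: leq_sum => a _; have kerm_a := kerm_sub_kerp dX a.
  apply: (@leq_sum_telescope _ _ SB _ (fun b => cum_dim (kerm dX a) (kerp dX a) (kerp dZ b))
    _ _ _ (undup_uniq _)) => [b _|b b' _ b'_SB b'b|b _]; rewrite ?Mf_block.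
  - exact: block_le_cum_dim.
  - apply: block_cum_dim_step => //; last exact: kerm_sub_kerp.
    exact: kerp_sub_kerm (SB_ge0 _ b'_SB) b'b.
  - exact: cum_dim_le.
apply: (@leq_sum_telescope _ _ SA _ (fun a => \dim (kerp dX a)) _ _ _ (undup_uniq _))
  => [a _|a a' _ a'_SA a'a|a _].
- exact: leq_subr.
- have /dimvS : (kerp dX a' <= kerm dX a)%VS by apply: kerp_sub_kerm (SA_ge0 _ a'_SA) a'a.
  have /dimvS := kerm_sub_kerp dX a.
  lia.
- exact: kerp_dim_le.
Qed.

Lemma sum_Mf_weighted_le q (s : seq (R * R)) : uniq s ->
  {in s, forall p : R * R, 0 <= p.1 /\ 0 <= p.2} ->
  \sum_(p <- s) (Mf dX dZ p.1 p.2)%:R * `|p.1 - p.2| ^+ q <= n.-1%:R * eps ^+ q.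
Proof.
move=> s_uniq s_ge0.
apply: (@le_trans _ _ (\sum_(p <- s) (Mf dX dZ p.1 p.2)%:R * eps ^+ q)).
  rewrite big_seq [X in _ <= X]big_seq; apply: ler_sum => p /s_ge0[a_ge0 b_ge0].
  have [far|near] := leP eps `|p.1 - p.2|; first by rewrite Mf_eq0_far // !mul0r.
  by rewrite ler_wpM2l // lerXn2r ?nnegrE ?normr_ge0 ?(ltW eps_gt0) ?(ltW near).
rewrite -mulr_suml -natr_sum ler_wpM2r ?exprn_ge0 ?(ltW eps_gt0) // ler_nat.
exact: sum_Mf_le.
Qed.

End Multiplicities.

Lemma finite_support_subset {T : Type} {J : choiceType} {idx : T} {P : set J}
    {F : J -> T} (x : J) :
  x \in finite_support idx P F -> P x.
Proof.
have [fin_supp|inf_supp] := pselect (finite_set (P `&` F @^-1` [set~ idx])%classic).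
  by rewrite in_finite_support // in_setE => -[].
by rewrite no_finite_support.
Qed.

Lemma powR_mul_exprnV (R : realType) (c e : R) q : 0 <= c -> 0 <= e -> (0 < q)%N ->
  (c * e ^+ q) `^ q%:R^-1 = c `^ q%:R^-1 * e.
Proof.
move=> c_ge0 e_ge0 q_gt0; rewrite powRM ?exprn_ge0 // -powR_mulrn // -powRrM.
by rewrite mulfV ?powRr1 // pnatr_eq0 -lt0n.
Qed.

Theorem theorem1 (R : realType) (n : nat) (dX dZ : 'I_n -> 'I_n -> R) (eps : R)
  (hn : (1 <= n)%N)
  (hXsym : forall i j, dX i j = dX j i) (hXnn : forall i j, 0 <= dX i j)
  (hZsym : forall i j, dZ i j = dZ j i) (hZnn : forall i j, 0 <= dZ i j)
  (heps : 0 < eps)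
  (hclose : forall i j, `|dX i j - dZ i j| < eps)
  (q : nat) (hq : (0 < q)%N) :
  dmatch dX dZ q <= powR (n.-1)%:R (q%:R^-1) * eps.
Proof.
rewrite /dmatch -powR_mul_exprnV ?ler0n ?(ltW heps) //; set s := finite_support _ _ _.
have s_ge0 : {in s, forall p : R * R, 0 <= p.1 /\ 0 <= p.2}.
  by move=> p p_s; exact: finite_support_subset p p_s.
apply: ge0_ler_powR; rewrite ?invr_ge0 ?ler0n ?nnegrE //.
- by apply: sumr_ge0 => p _; rewrite mulr_ge0 ?exprn_ge0.
- by rewrite mulr_ge0 ?exprn_ge0 ?(ltW heps).
- exact: sum_Mf_weighted_le heps hclose q _ (finite_support_uniq _ _ _) s_ge0.
Qed.
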